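(* Let $P\ge3$ be an integer and $\alpha=a/q$ with $q$ a positive integer and $\gcd(a,q)=1$. Let $k$ be a positive integer with $g=\gcd(k,q)\le4$. Then for every positive integer $Q$, every real number $\beta$ and every $\varepsilon$ with $0<\varepsilon\le1$, $$\sum_{x=0}^{Q-1}\min\Big(P,\frac{1}{2\|k\alpha x+\beta\|}\Big)\le\Big(1+\frac{gQ}{q}\Big)(P+q)\frac{2P^{\varepsilon}}{\varepsilon}.$$
   Context: For a real number $t$, $\|t\|=\min_{n\in\mathbb{Z}}|t-n|$ is the distance from $t$ to the nearest integer; when $\|t\|=0$ the minimum $\min(P,1/(2\|t\|))$ is taken to be $P$. *)

From Stdlib Require Import Reals ZArith Lra.
Open Scope R_scope.

Definition frac_part (t : R) : R := t - IZR (Int_part t).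

(* ||t|| = min_{n in Z} |t - n| = min(frac t, 1 - frac t) *)
Definition dist_nint (t : R) : R := Rmin (frac_part t) (1 - frac_part t).

(* min(P, 1/(2||t||)), taken to be P when ||t|| = 0 *)
Definition minterm (P t : R) : R :=
  if Req_EM_T (dist_nint t) 0 then P else Rmin P (/ (2 * dist_nint t)).

(* Write k a / q = c / n in lowest terms, with n = q / gcd(k, q), and split
   n beta = b + theta with b an integer and 0 <= theta < 1.  Modulo 1 the point
   k alpha x + beta is then (r x + theta) / n with r x = (c x + b) mod n, and since c
   is prime to n the residues r x of n consecutive x run through 0, ..., n-1 once
   each.  With s = 1/(2P), min(P, 1/(2||t||)) <= 1/(t + s) + 1/(1 - t + s) for
   0 <= t < 1, so one block of n terms is bounded by two sums n * sum_y 1/(y + u)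
   with u >= n s; comparing with log, each is at most 2P + n log(1 + 2P).  There
   are ceil(Q/n) <= 1 + g Q / q blocks, and log(1 + 2P) <= 1 + log P <= P^eps/eps. *)

From Pilot Require Import Defs.
From Stdlib Require Import Reals ZArith Lra Lia List Permutation Znumtheory.
Open Scope R_scope.

Definition lsum {A : Type} (f : A -> R) (l : list A) : R :=
  fold_right (fun x acc => f x + acc) 0 l.

Section ListSums.
Context {A : Type}.
Implicit Types (f g : A -> R) (l : list A).

Lemma lsum_app f l1 l2 : lsum f (l1 ++ l2) = lsum f l1 + lsum f l2.
Proof. induction l1 as [|x l1 IH]; simpl; [ring | rewrite IH; ring]. Qed.

Lemma lsum_plus f g l : lsum (fun x => f x + g x) l = lsum f l + lsum g l.
Proof. induction l as [|x l IH]; simpl; [ring | rewrite IH; ring]. Qed.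

Lemma lsum_scal c f l : lsum (fun x => c * f x) l = c * lsum f l.
Proof. induction l as [|x l IH]; simpl; [ring | rewrite IH; ring]. Qed.

Lemma lsum_le f g l : (forall x, In x l -> f x <= g x) -> lsum f l <= lsum g l.
Proof.
  induction l as [|x l IH]; simpl; intros Hfg; [lra|].
  assert (f x <= g x) by auto. assert (lsum f l <= lsum g l) by auto. lra.
Qed.

Lemma lsum_nonneg f l : (forall x, In x l -> 0 <= f x) -> 0 <= lsum f l.
Proof.
  induction l as [|x l IH]; simpl; intros Hf; [lra|].
  assert (0 <= f x) by auto. assert (0 <= lsum f l) by auto. lra.
Qed.

Lemma lsum_perm f l1 l2 : Permutation l1 l2 -> lsum f l1 = lsum f l2.
Proof. induction 1; simpl; lra. Qed.

Lemma lsum_map {B : Type} f (h : B -> A) (l : list B) :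
  lsum f (map h l) = lsum (fun x => f (h x)) l.
Proof. induction l as [|x l IH]; simpl; congruence. Qed.

End ListSums.

Lemma sum_f_R0_lsum (f : nat -> R) m : sum_f_R0 f m = lsum f (seq 0 (S m)).
Proof.
  induction m as [|m IH]; [simpl; ring|].
  rewrite tech5, IH, (seq_S (S m)), lsum_app. simpl. ring.
Qed.

Lemma lsum_seq_inj (f : nat -> R) (h : nat -> nat) x0 n :
  (forall x, x0 <= x < x0 + n -> h x < n)%nat ->
  (forall x1 x2, x0 <= x1 < x0 + n -> x0 <= x2 < x0 + n -> h x1 = h x2 -> x1 = x2)%nat ->
  lsum (fun x => f (h x)) (seq x0 n) = lsum f (seq 0 n).
Proof.
  intros Hlt Hinj. rewrite <- lsum_map. apply lsum_perm, NoDup_Permutation_bis.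
  - apply NoDup_map_NoDup_ForallPairs; [|apply seq_NoDup].
    intros x1 x2 H1%in_seq H2%in_seq. apply Hinj; lia.
  - now rewrite length_map, !length_seq.
  - intros y (x & <- & Hx%in_seq)%in_map_iff. apply in_seq. specialize (Hlt x). lia.
Qed.

Lemma lsum_reflect (f : nat -> R) n :
  lsum (fun y => f (n - 1 - y)%nat) (seq 0 n) = lsum f (seq 0 n).
Proof. apply (lsum_seq_inj f (fun y => n - 1 - y)%nat); intros; lia. Qed.

Lemma lsum_blocks (f : nat -> R) n T M :
  (forall i, lsum f (seq (i * n) n) = T) -> lsum f (seq 0 (M * n)) = INR M * T.
Proof.
  intros Hblock. induction M as [|M IH]; [simpl; ring|].
  rewrite Nat.mul_succ_l, seq_app, lsum_app, IH, Nat.add_0_l, Hblock, S_INR. ring.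
Qed.

Lemma lsum_seq_prefix_le (f : nat -> R) Q N :
  (Q <= N)%nat -> (forall x, (x < N)%nat -> 0 <= f x) ->
  lsum f (seq 0 Q) <= lsum f (seq 0 N).
Proof.
  intros HQN Hf. replace N with (Q + (N - Q))%nat by lia.
  rewrite seq_app, lsum_app.
  assert (0 <= lsum f (seq (0 + Q) (N - Q))).
  { apply lsum_nonneg. intros x Hx%in_seq. apply Hf. lia. }
  lra.
Qed.

Lemma ln_le x y : 0 < x -> x <= y -> ln x <= ln y.
Proof.
  intros Hx [Hxy | <-]; [left; apply ln_increasing |]; lra.
Qed.

Lemma ln_le_sub_1 z : 0 < z -> ln z <= z - 1.
Proof.
  intros Hz. rewrite <- (ln_exp (z - 1)).
  apply ln_le; [exact Hz | pose proof (exp_ineq1_le (z - 1)); lra].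
Qed.

Lemma inv_le_ln_sub y : 1 < y -> / y <= ln y - ln (y - 1).
Proof.
  intros Hy.
  assert (Hsplit : y - 1 = y * (1 - / y)) by (field; lra).
  assert (Hpos : 0 < 1 - / y).
  { assert (/ y < 1) by (rewrite <- Rinv_1; apply Rinv_lt_contravar; lra). lra. }
  rewrite Hsplit, ln_mult by lra.
  pose proof (ln_le_sub_1 _ Hpos). lra.
Qed.

Lemma lsum_inv_shift_le u m :
  0 < u -> lsum (fun y => / (INR y + u)) (seq 0 (S m)) <= / u + ln (INR m + u) - ln u.
Proof.
  intros Hu. induction m as [|m IH].
  - simpl. rewrite Rplus_0_l. lra.
  - rewrite seq_S, lsum_app. cbn [lsum fold_right Nat.add]. rewrite S_INR.
    pose proof (pos_INR m).
    pose proof (inv_le_ln_sub (INR m + 1 + u) ltac:(lra)) as Hstep.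
    replace (INR m + 1 + u - 1) with (INR m + u) in Hstep by ring.
    lra.
Qed.

Lemma lsum_harmonic_block_le (n : nat) P u :
  (0 < n)%nat -> 0 < P -> INR n <= 2 * P * u ->
  lsum (fun y => INR n / (INR y + u)) (seq 0 n) <= 2 * P + INR n * ln (1 + 2 * P).
Proof.
  intros Hn HP Hu.
  destruct n as [|m]; [lia|].
  rewrite S_INR in *.
  pose proof (pos_INR m).
  assert (Hu0 : 0 < u) by nra.
  assert (Hratio : (INR m + 1) * / u <= 2 * P).
  { apply (Rmult_le_reg_r u); [lra|]. rewrite Rmult_assoc, Rinv_l by lra. lra. }
  assert (Hlog : ln (INR m + u) - ln u <= ln (1 + 2 * P)).
  { assert (Hm : 0 <= INR m * / u) by (apply Rmult_le_pos; [|left; apply Rinv_0_lt_compat]; lra).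
    replace (INR m + u) with (u * (1 + INR m * / u)) by (field; lra).
    rewrite ln_mult by lra.
    enough (ln (1 + INR m * / u) <= ln (1 + 2 * P)) by lra.
    apply ln_le; [lra|]. apply Rplus_le_compat_l.
    apply Rle_trans with ((INR m + 1) * / u); [|lra].
    apply Rmult_le_compat_r; [left; apply Rinv_0_lt_compat|]; lra. }
  unfold Rdiv. rewrite lsum_scal.
  pose proof (lsum_inv_shift_le u m Hu0).
  nra.
Qed.

Lemma dist_nint_nonneg t : 0 <= dist_nint t.
Proof.
  unfold dist_nint, Defs.frac_part. pose proof (base_fp t) as Hfp. unfold R_Ifp.frac_part in Hfp.
  apply Rmin_glb; lra.
Qed.

Lemma minterm_le_inv P t : 0 < P -> minterm P t <= / (dist_nint t + / (2 * P)).
Proof.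
  intros HP. pose proof (dist_nint_nonneg t) as Hd.
  set (d := dist_nint t) in *.
  assert (HPs : P = / (2 * / (2 * P))) by (field; lra).
  assert (Hs : 0 < / (2 * P)) by (apply Rinv_0_lt_compat; lra).
  unfold minterm; fold d. destruct (Req_EM_T d 0) as [-> | Hd0].
  - rewrite HPs at 1. apply Rinv_le_contravar; lra.
  - destruct (Rle_dec d (/ (2 * P))).
    + eapply Rle_trans; [apply Rmin_l|]. rewrite HPs at 1. apply Rinv_le_contravar; lra.
    + eapply Rle_trans; [apply Rmin_r|]. apply Rinv_le_contravar; lra.
Qed.

Lemma dist_nint_int_add (z : Z) t : 0 <= t < 1 -> dist_nint (IZR z + t) = Rmin t (1 - t).
Proof.
  intros Ht. unfold dist_nint.
  destruct (Int_part_frac_part_spec (IZR z + t) z t Ht eq_refl) as [_ Hfrac].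
  change (Defs.frac_part (IZR z + t)) with (R_Ifp.frac_part (IZR z + t)). now rewrite <- Hfrac.
Qed.

Lemma minterm_int_add_le P (z : Z) t : 0 < P -> 0 <= t < 1 ->
  minterm P (IZR z + t) <= / (t + / (2 * P)) + / (1 - t + / (2 * P)).
Proof.
  intros HP Ht.
  assert (Hs : 0 < / (2 * P)) by (apply Rinv_0_lt_compat; lra).
  assert (0 < / (t + / (2 * P))) by (apply Rinv_0_lt_compat; lra).
  assert (0 < / (1 - t + / (2 * P))) by (apply Rinv_0_lt_compat; lra).
  eapply Rle_trans; [apply minterm_le_inv; exact HP|].
  rewrite dist_nint_int_add by exact Ht.
  unfold Rmin. destruct (Rle_dec t (1 - t)); lra.
Qed.

Section LinearResidues.
Variables (n : nat) (c b : Z).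
Hypothesis n_pos : (0 < n)%nat.
Hypothesis c_coprime : rel_prime c (Z.of_nat n).

Definition residue (x : nat) : nat := Z.to_nat ((c * Z.of_nat x + b) mod Z.of_nat n).

Lemma residue_bound x : (0 <= (c * Z.of_nat x + b) mod Z.of_nat n < Z.of_nat n)%Z.
Proof. apply Z.mod_pos_bound. lia. Qed.

Lemma residue_lt x : (residue x < n)%nat.
Proof. unfold residue. pose proof (residue_bound x). lia. Qed.

Lemma INR_residue x : INR (residue x) = IZR ((c * Z.of_nat x + b) mod Z.of_nat n).
Proof. unfold residue. rewrite INR_IZR_INZ, Z2Nat.id; [reflexivity | apply residue_bound]. Qed.

Lemma residue_inj x0 x1 x2 :
  (x0 <= x1 < x0 + n)%nat -> (x0 <= x2 < x0 + n)%nat -> residue x1 = residue x2 -> x1 = x2.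
Proof.
  intros H1 H2 Heq.
  pose proof (residue_bound x1). pose proof (residue_bound x2).
  unfold residue in Heq. apply Z2Nat.inj in Heq; try lia.
  assert (Hdiv : (Z.of_nat n | c * (Z.of_nat x1 - Z.of_nat x2))%Z).
  { exists ((c * Z.of_nat x1 + b) / Z.of_nat n - (c * Z.of_nat x2 + b) / Z.of_nat n)%Z.
    pose proof (Z.div_mod (c * Z.of_nat x1 + b) (Z.of_nat n) ltac:(lia)).
    pose proof (Z.div_mod (c * Z.of_nat x2 + b) (Z.of_nat n) ltac:(lia)).
    lia. }
  apply Gauss in Hdiv; [|now apply rel_prime_sym].
  destruct Hdiv as [m Hm].
  assert (m = 0%Z) by nia. lia.
Qed.

Lemma lsum_residue_blocks (f : nat -> R) M :
  lsum (fun x => f (residue x)) (seq 0 (M * n)) = INR M * lsum f (seq 0 n).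
Proof.
  apply lsum_blocks. intros i. apply (lsum_seq_inj f residue).
  - intros x _. apply residue_lt.
  - intros x1 x2. apply residue_inj.
Qed.

End LinearResidues.

Section RationalFrequency.
Variables (P beta : R) (n : nat) (c : Z).
Hypothesis P_pos : 0 < P.
Hypothesis n_pos : (0 < n)%nat.
Hypothesis c_coprime : rel_prime c (Z.of_nat n).

Let b : Z := Int_part (INR n * beta).
Let theta : R := INR n * beta - IZR b.
Let r (x : nat) : nat := residue n c b x.

Lemma theta_bounds : 0 <= theta < 1.
Proof. unfold theta, b. pose proof (base_Int_part (INR n * beta)). lra. Qed.

Lemma rational_point_decomp x :
  IZR c / INR n * INR x + beta
  = IZR ((c * Z.of_nat x + b) / Z.of_nat n) + (INR (r x) + theta) / INR n.
Proof.
  pose proof (lt_0_INR n n_pos).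
  unfold r. rewrite INR_residue by exact n_pos.
  pose proof (Z.div_mod (c * Z.of_nat x + b) (Z.of_nat n) ltac:(lia)) as Hdm.
  apply (f_equal IZR) in Hdm. rewrite plus_IZR, mult_IZR, plus_IZR, mult_IZR in Hdm.
  rewrite <- !INR_IZR_INZ in Hdm. unfold theta.
  apply (Rmult_eq_reg_l (INR n)); [|lra].
  field_simplify; [|lra|lra]. lra.
Qed.

Definition frequency_bound (x : nat) : R :=
  INR n / (INR (r x) + (theta + INR n / (2 * P)))
  + INR n / (INR (n - 1 - r x) + (1 - theta + INR n / (2 * P))).

Lemma minterm_le_frequency_bound x :
  minterm P (IZR c / INR n * INR x + beta) <= frequency_bound x.
Proof.
  pose proof (lt_0_INR n n_pos). pose proof theta_bounds.
  pose proof (residue_lt n c b n_pos x) as Hr. fold (r x) in Hr.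
  assert (HrR : INR (r x) + 1 <= INR n) by (rewrite <- S_INR; apply le_INR; lia).
  pose proof (pos_INR (r x)).
  assert (Hrefl : INR (n - 1 - r x) = INR n - 1 - INR (r x)).
  { rewrite !minus_INR by lia. simpl. ring. }
  assert (Hs : 0 < INR n / (2 * P)) by (apply Rdiv_lt_0_compat; lra).
  set (t := (INR (r x) + theta) / INR n).
  assert (Ht : 0 <= t < 1).
  { unfold t. split.
    - apply Rmult_le_pos; [lra | left; apply Rinv_0_lt_compat; lra].
    - apply (Rmult_lt_reg_r (INR n)); [lra|]. unfold Rdiv.
      rewrite Rmult_assoc, Rinv_l by lra. lra. }
  rewrite rational_point_decomp.
  eapply Rle_trans; [apply minterm_int_add_le; assumption|].
  unfold frequency_bound, t. rewrite Hrefl.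
  apply Req_le. field. repeat split; nra.
Qed.

Lemma frequency_bound_nonneg x : 0 <= frequency_bound x.
Proof.
  pose proof (lt_0_INR n n_pos). pose proof theta_bounds.
  pose proof (pos_INR (r x)). pose proof (pos_INR (n - 1 - r x)).
  assert (Hs : 0 < INR n / (2 * P)) by (apply Rdiv_lt_0_compat; lra).
  unfold frequency_bound.
  apply Rplus_le_le_0_compat; left; apply Rdiv_lt_0_compat; lra.
Qed.

Theorem lsum_minterm_rational_le (M Q : nat) :
  (Q <= M * n)%nat ->
  lsum (fun x => minterm P (IZR c / INR n * INR x + beta)) (seq 0 Q)
  <= INR M * (4 * P + 2 * INR n * ln (1 + 2 * P)).
Proof.
  intros HQ. pose proof theta_bounds.
  assert (Hs : 2 * P * (INR n / (2 * P)) = INR n) by (field; lra).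
  assert (Hblock : forall u, INR n <= 2 * P * u ->
    lsum (fun y => INR n / (INR y + u)) (seq 0 n) <= 2 * P + INR n * ln (1 + 2 * P)).
  { intros u Hu. now apply lsum_harmonic_block_le. }
  apply Rle_trans with (lsum frequency_bound (seq 0 Q)).
  { apply lsum_le. intros x _. apply minterm_le_frequency_bound. }
  apply Rle_trans with (lsum frequency_bound (seq 0 (M * n))).
  { apply lsum_seq_prefix_le; [exact HQ | intros x _; apply frequency_bound_nonneg]. }
  unfold frequency_bound. rewrite lsum_plus.
  rewrite (lsum_residue_blocks n c b n_pos c_coprime
             (fun y => INR n / (INR y + (theta + INR n / (2 * P))))).
  rewrite (lsum_residue_blocks n c b n_pos c_coprime
             (fun y => INR n / (INR (n - 1 - y) + (1 - theta + INR n / (2 * P))))).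
  rewrite (lsum_reflect (fun y => INR n / (INR y + (1 - theta + INR n / (2 * P))))).
  pose proof (pos_INR M).
  pose proof (Hblock (theta + INR n / (2 * P)) ltac:(nra)).
  pose proof (Hblock (1 - theta + INR n / (2 * P)) ltac:(nra)).
  nra.
Qed.

End RationalFrequency.

Lemma exp_1_ge_7_3 : 7 / 3 <= exp 1.
Proof.
  replace 1 with (/ 3 + / 3 + / 3) by field. rewrite !exp_plus.
  pose proof (exp_ineq1_le (/ 3)). nra.
Qed.

Lemma one_le_ln P : 3 <= P -> 1 <= ln P.
Proof. intros HP. rewrite <- ln_exp at 1. apply ln_le; [apply exp_pos | pose proof exp_le_3; lra]. Qed.

Lemma ln_1_add_2x_le P : 3 <= P -> ln (1 + 2 * P) <= 1 + ln P.
Proof.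
  intros HP. pose proof exp_1_ge_7_3.
  rewrite <- (ln_exp 1) at 2. rewrite <- ln_mult by (try apply exp_pos; lra).
  apply ln_le; nra.
Qed.

Lemma one_add_ln_le_Rpower_div P eps :
  1 <= P -> 0 < eps <= 1 -> 1 + ln P <= Rpower P eps / eps.
Proof.
  intros HP Heps.
  assert (Hln : 0 <= ln P) by (rewrite <- ln_1; apply ln_le; lra).
  pose proof (exp_ineq1_le (eps * ln P)). unfold Rpower.
  apply (Rmult_le_reg_r eps); [lra|]. unfold Rdiv.
  rewrite Rmult_assoc, Rinv_l by lra. nra.
Qed.

Lemma block_bound_le_Rpower P (n : nat) q eps :
  3 <= P -> INR n <= q -> 0 < eps <= 1 ->
  4 * P + 2 * INR n * ln (1 + 2 * P) <= (P + q) * (2 * Rpower P eps / eps).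
Proof.
  intros HP Hnq Heps.
  pose proof (one_le_ln P HP). pose proof (ln_1_add_2x_le P HP).
  pose proof (one_add_ln_le_Rpower_div P eps ltac:(lra) Heps).
  assert (0 <= ln (1 + 2 * P)) by (rewrite <- ln_1; apply ln_le; lra).
  pose proof (pos_INR n).
  unfold Rdiv in *. nra.
Qed.

Lemma ceil_div_spec (Q n : nat) :
  (0 < n)%nat ->
  (Q <= (Q + n - 1) / n * n)%nat /\ INR ((Q + n - 1) / n) <= 1 + INR Q / INR n.
Proof.
  intros Hn. set (M := ((Q + n - 1) / n)%nat).
  pose proof (Nat.div_mod (Q + n - 1) n ltac:(lia)) as Hdm.
  pose proof (Nat.mod_upper_bound (Q + n - 1) n ltac:(lia)). fold M in Hdm.
  split; [nia|].
  assert (HMn : INR M * INR n <= INR Q + INR n - 1).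
  { rewrite <- mult_INR. replace (INR Q + INR n - 1) with (INR (Q + n - 1))
      by (rewrite minus_INR, plus_INR by lia; simpl; ring).
    apply le_INR. nia. }
  pose proof (lt_0_INR n Hn).
  apply (Rmult_le_reg_r (INR n)); [lra|].
  rewrite Rmult_plus_distr_r. unfold Rdiv. rewrite Rmult_assoc, Rinv_l by lra. lra.
Qed.

Lemma Z_gcd_pos_r (k q : Z) : (0 < q)%Z -> (0 < Z.gcd k q)%Z.
Proof.
  intros Hq. pose proof (Z.gcd_nonneg k q).
  assert (Z.gcd k q <> 0%Z) by (intros H0%Z.gcd_eq_0_r; lia). lia.
Qed.

Lemma reduce_slope (a q k : Z) :
  (0 < q)%Z -> Z.gcd a q = 1%Z ->
  exists (c : Z) (n : nat), (0 < n)%nat /\ rel_prime c (Z.of_nat n)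
    /\ IZR k * (IZR a / IZR q) = IZR c / INR n
    /\ IZR (Z.gcd k q) * INR n = IZR q.
Proof.
  intros Hq Haq. set (g := Z.gcd k q).
  assert (Hg : (0 < g)%Z) by now apply Z_gcd_pos_r.
  assert (Hqg : q = (g * (q / g))%Z) by (apply Zdivide_Zdiv_eq; [lia | apply Z.gcd_divide_r]).
  assert (Hkg : k = (g * (k / g))%Z) by (apply Zdivide_Zdiv_eq; [lia | apply Z.gcd_divide_l]).
  assert (Hn : (0 < q / g)%Z) by nia.
  exists (k / g * a)%Z, (Z.to_nat (q / g)).
  rewrite INR_IZR_INZ, Z2Nat.id by lia.
  split; [lia|]. split; [|split].
  - apply rel_prime_sym, rel_prime_mult.
    + apply Zgcd_1_rel_prime. rewrite Z.gcd_comm. now apply Z.gcd_div_gcd; [lia|].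
    + apply rel_prime_div with q; [| exists g; lia].
      now apply rel_prime_sym, Zgcd_1_rel_prime.
  - assert (IZR g <> 0) by (apply not_0_IZR; lia).
    assert (IZR (q / g) <> 0) by (apply not_0_IZR; lia).
    rewrite Hqg at 1. rewrite Hkg at 1. rewrite !mult_IZR. field. auto.
  - rewrite <- mult_IZR. now f_equal.
Qed.

Theorem lemma10 (P : nat) (a q k : Z) (Q : nat) (beta eps : R) :
  (3 <= P)%nat ->
  (0 < q)%Z -> Z.gcd a q = 1%Z ->
  (0 < k)%Z -> (Z.gcd k q <= 4)%Z ->
  (1 <= Q)%nat ->
  0 < eps <= 1 ->
  sum_f_R0 (fun x : nat =>
      minterm (INR P) (IZR k * (IZR a / IZR q) * INR x + beta)) (Q - 1)
  <= (1 + IZR (Z.gcd k q) * INR Q / IZR q) * (INR P + IZR q)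
     * (2 * Rpower (INR P) eps / eps).
Proof.
  intros HP Hq Haq _ _ HQ Heps.
  assert (HPR : 3 <= INR P) by (replace 3 with (INR 3) by (simpl; ring); now apply le_INR).
  destruct (reduce_slope a q k Hq Haq) as (c & n & Hn & Hcop & Hslope & Hgn).
  destruct (ceil_div_spec Q n Hn) as [HQM HM].
  assert (HnR : 0 < INR n) by now apply lt_0_INR.
  assert (Hg : 1 <= IZR (Z.gcd k q)) by (apply IZR_le; pose proof (Z_gcd_pos_r k q Hq); lia).
  assert (Hfrac : IZR (Z.gcd k q) * INR Q / IZR q = INR Q / INR n).
  { rewrite <- Hgn. field. lra. }
  rewrite sum_f_R0_lsum, Hslope, Hfrac. replace (S (Q - 1)) with Q by lia.
  eapply Rle_trans.
  { apply lsum_minterm_rational_le; [lra | exact Hn | exact Hcop | exact HQM]. }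
  rewrite (Rmult_assoc (1 + _)). apply Rmult_le_compat; [apply pos_INR | | exact HM |].
  - assert (0 <= ln (1 + 2 * INR P)) by (rewrite <- ln_1; apply ln_le; lra). nra.
  - apply block_bound_le_Rpower; [exact HPR | nra | exact Heps].
Qed.
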